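(* Let $\mathfrak n=W\oplus\mathfrak z$ be a finite-dimensional 2-step nilpotent Lie algebra over a field of characteristic zero, with basis $z_1,\dots,z_m$ of the center $\mathfrak z$ and $T_i$ as below. Suppose given: (a) a linear map $\delta_{\mathfrak z}:\mathfrak z\to\Lambda^2\mathfrak z$ satisfying co-Jacobi; write $\delta_{\mathfrak z}(z_i)=\sum_{a<b}c_i^{ab}z_a\wedge z_b$; (b) linear maps $D^1,\dots,D^m:W\to W$ with $[D^a,D^b]=\sum_ic_i^{ab}D^i$ for all $a<b$, and such that for all $x,y\in W$ $$\sum_iT_i(x)(y)\,\delta_{\mathfrak z}(z_i)=\sum_{i,j}\big(T_i(D^jx)(y)+T_i(x)(D^jy)\big)z_i\wedge z_j;$$ (c) a linear map $\varphi:W\to\Lambda^2\mathfrak z$, $\varphi(v)=\sum_{a<b}\varphi_{ab}(v)z_a\wedge z_b$, such that for all $v\in W$ $$\sum_i\varphi(D^iv)\wedge z_i+\sum_{a<b}\varphi_{ab}(v)\big(\delta_{\mathfrak z}(z_a)\wedge z_b-z_a\wedge\delta_{\mathfrak z}(z_b)\big)=0\in\Lambda^3\mathfrak z.$$ Then the linear map $\delta:\mathfrak n\to\Lambda^2\mathfrak n$ given by $\delta(z)=\delta_{\mathfrak z}(z)$ for $z\in\mathfrak z$ and $\delta(v)=\sum_iD^i(v)\wedge z_i+\varphi(v)$ for $v\in W$ is a Lie bialgebra structure on $\mathfrak n$.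
   Context: $W$ is a linear complement of $\mathfrak z$; $T_i:W\to W^*$ is defined by $[v,w]=\sum_iT_i(v)(w)z_i$. A Lie bialgebra structure is a linear $\delta:\mathfrak n\to\Lambda^2\mathfrak n$ satisfying co-Jacobi ($\delta(x_1)\wedge x_2-x_1\wedge\delta(x_2)=0$ in $\Lambda^3$, Sweedler notation $\delta(x)=x_1\wedge x_2$) and the 1-cocycle condition $\delta[x,y]=[\delta x,y]+[x,\delta y]$. (In the paper, condition (b) on the commutators is phrased as: $f\mapsto-\sum_if(z_i)D^i$ is a Lie algebra map $\mathfrak z^*\to\mathrm{End}(W)$ for the bracket dual to $\delta_{\mathfrak z}$; condition (c) as: the transpose $\Lambda^2\mathfrak z^*\to W^*$ of $\varphi$ is a 2-cocycle with values in $W^*$.) *)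

(* Coordinate model of a 2-step nilpotent Lie algebra
   n = W (+) z with W = F^p, z = F^m, and of exterior powers:
   Lambda^2 V  ~ antisymmetric matrices  (x /\ y  |->  x^T y - y^T x),
   Lambda^3 V  ~ alternating 3-tensors   'I_n -> 'I_n -> 'I_n -> F.     *)
From HB Require Import structures.
From mathcomp Require Import all_boot all_order all_algebra.
Set Implicit Arguments. Unset Strict Implicit. Unset Printing Implicit Defensive.
Import GRing.Theory.
Local Open Scope ring_scope.

Section Ext.
Variable F : fieldType.

Definition ev n (i : 'I_n) : 'rV[F]_n := delta_mx 0 i.

Definition wedge2 n (x y : 'rV[F]_n) : 'M[F]_n := x^T *m y - y^T *m x.

Definition in_L2 n (w : 'M[F]_n) : Prop :=
  (forall i j, w i j = - w j i) /\ (forall i, w i i = 0).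

(* Lambda^3 (F^n) as 3-tensors; omega /\ x and x /\ omega *)
Definition L3 n := 'I_n -> 'I_n -> 'I_n -> F.
Definition wedge21 n (w : 'M[F]_n) (x : 'rV[F]_n) : L3 n :=
  fun i j k => w i j * x 0 k + w j k * x 0 i + w k i * x 0 j.
Definition wedge12 n (x : 'rV[F]_n) (w : 'M[F]_n) : L3 n :=
  fun i j k => x 0 i * w j k + x 0 j * w k i + x 0 k * w i j.

Definition is_linear n1 (U : lmodType F) (f : 'rV[F]_n1 -> U) : Prop :=
  forall (a : F) x y, f (a *: x + y) = a *: f x + f y.

(* co-Jacobi expression: for omega = sum_{a<b} w_ab e_a /\ e_b,
   sum_{a<b} w_ab (delta(e_a) /\ e_b - e_a /\ delta(e_b)) in Lambda^3 *)
Definition cojac_expr n (delta : 'rV[F]_n -> 'M[F]_n) (w : 'M[F]_n) : L3 n :=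
  fun i j k => \sum_(a < n) \sum_(b < n | (a < b)%N)
     w a b * (wedge21 (delta (ev a)) (ev b) i j k
              - wedge12 (ev a) (delta (ev b)) i j k).

Definition cojacobi n (delta : 'rV[F]_n -> 'M[F]_n) : Prop :=
  forall x i j k, cojac_expr delta (delta x) i j k = 0.

(* adjoint action of x on Lambda^2: [x, a/\b] = [x,a]/\b + a/\[x,b] *)
Definition adact n (br : 'rV[F]_n -> 'rV[F]_n -> 'rV[F]_n)
    (x : 'rV[F]_n) (w : 'M[F]_n) : 'M[F]_n :=
  \sum_(a < n) \sum_(b < n | (a < b)%N)
     w a b *: (wedge2 (br x (ev a)) (ev b) + wedge2 (ev a) (br x (ev b))).

(* 1-cocycle: delta[x,y] = [delta x, y] + [x, delta y],
   where [omega, y] = - y.omega *)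
Definition cocycle n (br : 'rV[F]_n -> 'rV[F]_n -> 'rV[F]_n)
    (delta : 'rV[F]_n -> 'M[F]_n) : Prop :=
  forall x y, delta (br x y) = adact br x (delta y) - adact br y (delta x).

Definition lie_bialgebra n (br : 'rV[F]_n -> 'rV[F]_n -> 'rV[F]_n)
    (delta : 'rV[F]_n -> 'M[F]_n) : Prop :=
  [/\ is_linear delta, (forall x, in_L2 (delta x)), cojacobi delta
    & cocycle br delta].

Section TwoStep.
Variables p m : nat.

Definition Tform (Ti : 'M[F]_p) (x y : 'rV[F]_p) : F := (x *m Ti *m y^T) 0 0.

Definition inW (v : 'rV[F]_p) : 'rV[F]_(p + m) := row_mx v 0.
Definition zb (i : 'I_m) : 'rV[F]_(p + m) := row_mx 0 (ev i).

Definition brN (T : 'I_m -> 'M[F]_p) (x y : 'rV[F]_(p + m)) : 'rV[F]_(p + m) :=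
  \sum_(i < m) Tform (T i) (lsubmx x) (lsubmx y) *: zb i.

Definition Dapp (D : 'I_m -> 'M[F]_p) (j : 'I_m) (v : 'rV[F]_p) : 'rV[F]_p :=
  v *m D j.

Definition strc (dZ : 'rV[F]_m -> 'M[F]_m) (i a b : 'I_m) : F := dZ (ev i) a b.

Definition lift2 (w : 'M[F]_m) : 'M[F]_(p + m) :=
  \sum_(a < m) \sum_(b < m | (a < b)%N) w a b *: wedge2 (zb a) (zb b).

Definition deltaN (dZ : 'rV[F]_m -> 'M[F]_m) (D : 'I_m -> 'M[F]_p)
    (phi : 'rV[F]_p -> 'M[F]_m) (x : 'rV[F]_(p + m)) : 'M[F]_(p + m) :=
  lift2 (dZ (rsubmx x))
  + \sum_(i < m) wedge2 (inW (Dapp D i (lsubmx x))) (zb i)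
  + lift2 (phi (lsubmx x)).

End TwoStep.
End Ext.
Arguments ev {F n} i.

From HB Require Import structures.
From mathcomp Require Import all_boot all_order all_algebra ring.
Set Implicit Arguments. Unset Strict Implicit. Unset Printing Implicit Defensive.
Import GRing.Theory.
Local Open Scope ring_scope.

(* In coordinates, Lambda^2 V is the space of antisymmetric matrices and all the
   identities become entrywise.  For a linear delta, the co-Jacobi expression at w
   is the cyclic sum over (i, j, k) of delta(w_k)_ij, where w_k is the k-th column
   of w, and [x, w]_ij = [x, w_j]_i - [x, w_i]_j.  Split the indices of n into
   W-indices and z-indices: the bracket of n takes values in z, and delta(v + z)
   has blocks 0 on W x W, (v D^b)_s on W x z and delta_z(z) + phi(v) on z x z.
   Hence the cocycle condition is automatic except on the z x z block, where it
   is the second half of (b); the co-Jacobi identity holds trivially on the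
   blocks W W W and W W z, on W z z it is [D^a, D^b] = sum_i c_i^ab D^i, and on
   z z z it is co-Jacobi for delta_z together with (c). *)

Section Coordinates.
Variable F : fieldType.

Lemma evE n (i j : 'I_n) : (ev i : 'rV[F]_n) 0 j = (i == j)%:R.
Proof. by rewrite /ev mxE eqxx eq_sym. Qed.

Lemma wedge2E n (x y : 'rV[F]_n) i j :
  wedge2 x y i j = x 0 i * y 0 j - y 0 i * x 0 j.
Proof. by rewrite /wedge2 !mxE !big_ord1 !mxE. Qed.

Lemma addmxE m n (A B : 'M[F]_(m, n)) i j : (A + B) i j = A i j + B i j.
Proof. exact: mxE. Qed.

Lemma sum_mul_delta n (G : 'I_n -> F) k : \sum_(b < n) G b * (b == k)%:R = G k.
Proof.
by rewrite (bigD1 k) //= eqxx mulr1 big1 ?addr0 // => b /negbTE ->; rewrite mulr0.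
Qed.

Lemma sum_delta_mul n (G : 'I_n -> F) k : \sum_(b < n) (b == k)%:R * G b = G k.
Proof. by rewrite -[RHS](sum_mul_delta G k); apply: eq_bigr => b _; rewrite mulrC. Qed.

Lemma row_sum_ev n (x : 'rV[F]_n) : x = \sum_(i < n) x 0 i *: ev i.
Proof.
apply/rowP => j; rewrite summxE; under eq_bigr do rewrite mxE evE.
by rewrite sum_mul_delta.
Qed.

Section IsLinear.
Variables (n : nat) (U : lmodType F) (f : 'rV[F]_n -> U).
Hypothesis f_lin : is_linear f.

Lemma is_linear0 : f 0 = 0.
Proof.
have := f_lin 1 0 0; rewrite scale1r addr0 scale1r => f0.
by apply: (addrI (f 0)); rewrite addr0 -f0.
Qed.

Lemma is_linearD x y : f (x + y) = f x + f y.
Proof. by have := f_lin 1 x y; rewrite !scale1r. Qed.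

Lemma is_linearZ a x : f (a *: x) = a *: f x.
Proof. by have := f_lin a x 0; rewrite !addr0 is_linear0 addr0. Qed.

Lemma is_linear_sum_ev (c : 'I_n -> F) :
  f (\sum_(i < n) c i *: ev i) = \sum_(i < n) c i *: f (ev i).
Proof.
by rewrite (big_morph f is_linearD is_linear0); apply: eq_bigr => i _; apply: is_linearZ.
Qed.

Lemma is_linear_col (w : 'M[F]_n) k :
  f (col k w)^T = \sum_(a < n) w a k *: f (ev a).
Proof.
rewrite {1}(row_sum_ev (col k w)^T) is_linear_sum_ev.
by apply: eq_bigr => a _; rewrite !mxE.
Qed.

End IsLinear.

Lemma sum_lt_antisym n (w : 'M[F]_n) (f : 'I_n -> 'I_n -> F) : in_L2 w ->
  \sum_(a < n) \sum_(b < n | (a < b)%N) w a b * (f a b - f b a)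
  = \sum_(a < n) \sum_(b < n) w a b * f a b.
Proof.
case=> w_anti w_diag.
under eq_bigr do under eq_bigr do rewrite mulrBr.
under eq_bigr do rewrite sumrB.
rewrite sumrB [X in _ - X](exchange_big_dep xpredT) //=.
have -> : \sum_(j < n) \sum_(i < n | (i < j)%N) w i j * f j i
   = - \sum_(a < n) \sum_(b < n | (b < a)%N) w a b * f a b.
  rewrite -sumrN; apply: eq_bigr => a _; rewrite -sumrN; apply: eq_bigr => b _.
  by rewrite w_anti mulNr.
rewrite opprK -big_split /=; apply: eq_bigr => a _.
rewrite [RHS](bigID (fun b : 'I_n => (a < b)%N)) /=; congr (_ + _).
rewrite [RHS](bigID (fun b : 'I_n => (b < a)%N)) /= [X in _ = _ + X]big1 ?addr0.
  apply: eq_bigl => b; case: (ltnP b a) => ba /=; last by rewrite andbF.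
  by rewrite andbT -leqNgt ltnW.
move=> b /andP[]; rewrite -!leqNgt => ab ba.
by rewrite (_ : b = a) ?w_diag ?mul0r //; apply/val_inj/eqP; rewrite eqn_leq ab ba.
Qed.

Lemma cojac_exprE n (delta : 'rV[F]_n -> 'M[F]_n) (w : 'M[F]_n) i j k :
  is_linear delta -> in_L2 w ->
  cojac_expr delta w i j k =
  delta (col k w)^T i j + delta (col i w)^T j k + delta (col j w)^T k i.
Proof.
move=> delta_lin w_L2; rewrite /cojac_expr.
have wedge12_21 a b : wedge12 (ev a) (delta (ev b)) i j k
                     = wedge21 (delta (ev b)) (ev a) i j k.
  by rewrite /wedge12 /wedge21; ring.
under eq_bigr do under eq_bigr do rewrite wedge12_21.
rewrite (sum_lt_antisym (fun a b => wedge21 (delta (ev a)) (ev b) i j k)) //.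
rewrite !is_linear_col // !summxE.
under eq_bigr do under eq_bigr do rewrite /wedge21 !evE !mulrDr !mulrA.
under eq_bigr do rewrite !big_split /= !sum_mul_delta.
by rewrite !big_split /=; congr (_ + _ + _); apply: eq_bigr => a _; rewrite mxE.
Qed.

Lemma cojac_expr_rot n (delta : 'rV[F]_n -> 'M[F]_n) (w : 'M[F]_n) i j k :
  is_linear delta -> in_L2 w ->
  cojac_expr delta w i j k = cojac_expr delta w j k i.
Proof. by move=> delta_lin w_L2; rewrite !cojac_exprE //; ring. Qed.

Lemma adactE n (br : 'rV[F]_n -> 'rV[F]_n -> 'rV[F]_n) x (w : 'M[F]_n) i j :
  is_linear (br x) -> in_L2 w ->
  adact br x w i j = br x (col j w)^T 0 i - br x (col i w)^T 0 j.
Proof.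
move=> br_lin w_L2; rewrite /adact summxE.
under eq_bigr do rewrite summxE.
pose f a b := br x (ev a) 0 i * ev b 0 j - ev b 0 i * br x (ev a) 0 j.
have entry a b : (w a b *: (wedge2 (br x (ev a)) (ev b) + wedge2 (ev a) (br x (ev b)))) i j
             = w a b * (f a b - f b a).
  by rewrite mxE addmxE !wedge2E /f; ring.
under eq_bigr do under eq_bigr do rewrite entry.
rewrite (sum_lt_antisym f) // /f !is_linear_col // !summxE.
under eq_bigr do under eq_bigr do rewrite !evE mulrBr !mulrA.
under eq_bigr do rewrite sumrB.
rewrite sumrB; congr (_ - _); apply: eq_bigr => a _; rewrite mxE.
  by rewrite sum_mul_delta.
under eq_bigr do rewrite -mulrA [_%:R * _]mulrC mulrA.
by rewrite sum_mul_delta.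
Qed.


Lemma sum_wedge2_ev n (c : 'I_n -> 'I_n -> F) s t :
  (\sum_(i < n) \sum_(j < n) c i j *: wedge2 (ev i) (ev j)) s t = c s t - c t s.
Proof.
rewrite summxE; under eq_bigr do rewrite summxE.
under eq_bigr do under eq_bigr do rewrite mxE wedge2E !evE mulrBr !mulrA.
under eq_bigr do rewrite sumrB.
rewrite sumrB; congr (_ - _).
  by under eq_bigr do rewrite sum_mul_delta; rewrite sum_mul_delta.
under eq_bigr do under eq_bigr do rewrite -mulrA [_%:R * _]mulrC mulrA.
by under eq_bigr do rewrite sum_mul_delta; rewrite sum_mul_delta.
Qed.

Lemma sum_wedge21_ev n (g : 'I_n -> 'M[F]_n) i j k :
  \sum_(l < n) wedge21 (g l) (ev l) i j k = g k i j + g i j k + g j k i.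
Proof.
by under eq_bigr do rewrite /wedge21 !evE; rewrite !big_split /= !sum_mul_delta.
Qed.

Section AlternatingForm.
Variables (p : nat) (B : 'M[F]_p).

Lemma TformDl x x' y : Tform B (x + x') y = Tform B x y + Tform B x' y.
Proof. by rewrite /Tform !mulmxDl mxE. Qed.

Lemma Tform_linear x : is_linear (Tform B x : _ -> F^o).
Proof.
move=> a y y'; rewrite /Tform linearD linearZ /= mulmxDr -scalemxAr.
by rewrite mxE [X in X + _]mxE.
Qed.

Lemma Tform0r x : Tform B x 0 = 0.
Proof. exact: (is_linear0 (Tform_linear x)). Qed.

Lemma Tform_skew x y : (forall v, Tform B v v = 0) -> Tform B x y = - Tform B y x.
Proof.
move=> B_alt; have := B_alt (x + y).
rewrite TformDl !(is_linearD (Tform_linear _)) !B_alt add0r addr0.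
by move/eqP; rewrite addr_eq0 => /eqP.
Qed.

End AlternatingForm.

End Coordinates.

Section TwoStepNilpotent.
Variables (F : fieldType) (p m : nat) (T : 'I_m -> 'M[F]_p)
  (dZ : 'rV[F]_m -> 'M[F]_m) (D : 'I_m -> 'M[F]_p) (phi : 'rV[F]_p -> 'M[F]_m).
Hypotheses (dZ_lin : is_linear dZ) (dZ_L2 : forall z, in_L2 (dZ z))
  (phi_lin : is_linear phi) (phi_L2 : forall v, in_L2 (phi v)).

Local Notation dN := (deltaN dZ D phi).
Local Notation W s := (@lshift p m s).
Local Notation Z a := (@rshift p m a).

Lemma zb_W c s : zb F p c 0 (W s) = 0.
Proof. by rewrite /zb row_mxEl mxE. Qed.

Lemma zb_Z c a : zb F p c 0 (Z a) = (c == a)%:R.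
Proof. by rewrite /zb row_mxEr evE. Qed.

Lemma inW_W (u : 'rV[F]_p) s : inW m u 0 (W s) = u 0 s.
Proof. by rewrite /inW row_mxEl. Qed.

Lemma inW_Z (u : 'rV[F]_p) a : inW m u 0 (Z a) = 0.
Proof. by rewrite /inW row_mxEr mxE. Qed.

Lemma lift2E (w : 'M[F]_m) i j : in_L2 w ->
  lift2 p w i j = \sum_(c < m) \sum_(d < m) w c d * (zb F p c 0 i * zb F p d 0 j).
Proof.
move=> w_L2; rewrite /lift2 summxE; under eq_bigr do rewrite summxE.
under eq_bigr do under eq_bigr do rewrite mxE wedge2E.
exact: sum_lt_antisym.
Qed.

Lemma lift2_Wl (w : 'M[F]_m) s j : in_L2 w -> lift2 p w (W s) j = 0.
Proof.
move=> w_L2; rewrite lift2E // big1 // => c _; rewrite big1 // => d _.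
by rewrite zb_W !mul0r mulr0.
Qed.

Lemma lift2_Wr (w : 'M[F]_m) i t : in_L2 w -> lift2 p w i (W t) = 0.
Proof.
move=> w_L2; rewrite lift2E // big1 // => c _; rewrite big1 // => d _.
by rewrite zb_W !mulr0.
Qed.

Lemma lift2_ZZ (w : 'M[F]_m) a b : in_L2 w -> lift2 p w (Z a) (Z b) = w a b.
Proof.
move=> w_L2; rewrite lift2E //.
under eq_bigr do under eq_bigr do rewrite !zb_Z mulrA.
by under eq_bigr do rewrite sum_mul_delta; rewrite sum_mul_delta.
Qed.

Lemma deltaNE x i j : dN x i j =
  lift2 p (dZ (rsubmx x)) i j + lift2 p (phi (lsubmx x)) i j
  + \sum_(l < m) (inW m (lsubmx x *m D l) 0 i * zb F p l 0 j
                  - zb F p l 0 i * inW m (lsubmx x *m D l) 0 j).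
Proof.
rewrite /deltaN !addmxE addrAC; congr (_ + _).
by rewrite summxE; apply: eq_bigr => l _; rewrite wedge2E.
Qed.

Lemma deltaN_WW x s t : dN x (W s) (W t) = 0.
Proof.
rewrite deltaNE lift2_Wl // lift2_Wl // !add0r big1 // => l _.
by rewrite !zb_W mulr0 mul0r subrr.
Qed.

Lemma deltaN_WZ x s b : dN x (W s) (Z b) = (lsubmx x *m D b) 0 s.
Proof.
rewrite deltaNE lift2_Wl // lift2_Wl // !add0r.
under eq_bigr do rewrite zb_W zb_Z mul0r subr0 inW_W.
by rewrite sum_mul_delta.
Qed.

Lemma deltaN_ZW x a t : dN x (Z a) (W t) = - (lsubmx x *m D a) 0 t.
Proof.
rewrite deltaNE lift2_Wr // lift2_Wr // !add0r.
under eq_bigr do rewrite zb_W zb_Z mulr0 sub0r inW_W.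
by rewrite sumrN sum_delta_mul.
Qed.

Lemma deltaN_ZZ x a b : dN x (Z a) (Z b) = dZ (rsubmx x) a b + phi (lsubmx x) a b.
Proof.
rewrite deltaNE !lift2_ZZ // big1 ?addr0 // => l _.
by rewrite !inW_Z mulr0 mul0r subrr.
Qed.

Lemma deltaN_linear : is_linear dN.
Proof.
have sub_lin (n1 n2 : nat) a (x y : 'rV[F]_(n1 + n2)) :
  (lsubmx (a *: x + y) = a *: lsubmx x + lsubmx y)
  * (rsubmx (a *: x + y) = a *: rsubmx x + rsubmx y).
  by split; apply/rowP => k; rewrite !mxE.
move=> a x y; apply/matrixP => i j; rewrite [RHS]addmxE [X in _ = X + _]mxE.
case: (split_ordP i) => s ->; case: (split_ordP j) => t ->.
- by rewrite !deltaN_WW mulr0 addr0.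
- by rewrite !deltaN_WZ sub_lin mulmxDl -scalemxAl mxE [X in X + _]mxE.
- by rewrite !deltaN_ZW sub_lin mulmxDl -scalemxAl mxE [X in X + _]mxE opprD mulrN.
- by rewrite !deltaN_ZZ !sub_lin dZ_lin phi_lin !mxE; ring.
Qed.

Lemma deltaN_L2 x : in_L2 (dN x).
Proof.
have [dZ_anti dZ_diag] := dZ_L2 (rsubmx x).
have [phi_anti phi_diag] := phi_L2 (lsubmx x).
split=> [i j|i].
  case: (split_ordP i) => s ->; case: (split_ordP j) => t ->.
  - by rewrite !deltaN_WW oppr0.
  - by rewrite deltaN_WZ deltaN_ZW opprK.
  - by rewrite deltaN_WZ deltaN_ZW.
  - by rewrite !deltaN_ZZ opprD dZ_anti phi_anti.
case: (split_ordP i) => s ->; first by rewrite deltaN_WW.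
by rewrite deltaN_ZZ dZ_diag phi_diag addr0.
Qed.

Lemma brN_W x y s : brN T x y 0 (W s) = 0.
Proof. by rewrite /brN summxE big1 // => c _; rewrite mxE zb_W mulr0. Qed.

Lemma brN_Z x y c : brN T x y 0 (Z c) = Tform (T c) (lsubmx x) (lsubmx y).
Proof. by rewrite /brN summxE; under eq_bigr do rewrite mxE zb_Z; rewrite sum_mul_delta. Qed.

Lemma brN_linear x : is_linear (brN T x).
Proof.
move=> a y y'; apply/rowP => k; rewrite [RHS]addmxE [X in _ = X + _]mxE.
case: (split_ordP k) => s ->; first by rewrite !brN_W mulr0 addr0.
rewrite !brN_Z.
have -> : lsubmx (a *: y + y') = a *: lsubmx y + lsubmx y' by apply/rowP => t; rewrite !mxE.
exact: Tform_linear.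
Qed.

Lemma lsub_brN x y : lsubmx (brN T x y) = 0.
Proof. by apply/rowP => s; rewrite !mxE brN_W. Qed.

Lemma rsub_brN x y :
  rsubmx (brN T x y) = \sum_(c < m) Tform (T c) (lsubmx x) (lsubmx y) *: ev c.
Proof.
apply/rowP => c; rewrite mxE brN_Z summxE.
by under eq_bigr do rewrite mxE evE; rewrite sum_mul_delta.
Qed.

Lemma lsub_col_W y s : lsubmx (col (W s) (dN y))^T = 0.
Proof. by apply/rowP => t; rewrite 3!mxE deltaN_WW mxE. Qed.

Lemma lsub_col_Z y b : lsubmx (col (Z b) (dN y))^T = lsubmx y *m D b.
Proof. by apply/rowP => t; rewrite 3!mxE deltaN_WZ. Qed.

Lemma rsub_col_W y s :
  rsubmx (col (W s) (dN y))^T = \sum_(l < m) (- (lsubmx y *m D l) 0 s) *: ev l.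
Proof.
apply/rowP => c; rewrite 3!mxE deltaN_ZW summxE.
by under eq_bigr do rewrite mxE evE; rewrite sum_mul_delta.
Qed.

Lemma rsub_col_Z y b : rsubmx (col (Z b) (dN y))^T =
  (col b (dZ (rsubmx y)))^T + (col b (phi (lsubmx y)))^T.
Proof. by apply/rowP => c; rewrite 3!mxE deltaN_ZZ !mxE. Qed.

Hypothesis T_alt : forall i v, Tform (T i) v v = 0.
Hypothesis dZ_T_D : forall x y,
  \sum_(i < m) Tform (T i) x y *: dZ (ev i)
  = \sum_(i < m) \sum_(j < m)
      (Tform (T i) (Dapp D j x) y + Tform (T i) x (Dapp D j y))
        *: wedge2 (ev i) (ev j).

Lemma deltaN_cocycle : cocycle (brN T) dN.
Proof.
move=> x y; apply/matrixP => i j.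
rewrite [RHS]addmxE [X in _ = _ + X]mxE.
rewrite (adactE i j (brN_linear x) (deltaN_L2 y)) (adactE i j (brN_linear y) (deltaN_L2 x)).
case: (split_ordP i) => s ->; case: (split_ordP j) => t ->.
- by rewrite deltaN_WW !brN_W !subrr.
- by rewrite deltaN_WZ lsub_brN mul0mx mxE !brN_W !brN_Z !lsub_col_W
    !Tform0r !subrr ?oppr0.
- by rewrite deltaN_ZW lsub_brN mul0mx mxE !brN_W !brN_Z !lsub_col_W
    !Tform0r !subrr ?oppr0.
rewrite deltaN_ZZ lsub_brN (is_linear0 phi_lin) mxE addr0 !brN_Z !lsub_col_Z.
rewrite rsub_brN is_linear_sum_ev // summxE.
have := congr1 (fun M : 'M[F]_m => M s t) (dZ_T_D (lsubmx x) (lsubmx y)).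
rewrite sum_wedge2_ev summxE => ->; rewrite /Dapp.
rewrite (Tform_skew (lsubmx x *m D t) (lsubmx y) (T_alt s)).
rewrite (Tform_skew (lsubmx x *m D s) (lsubmx y) (T_alt t)).
ring.
Qed.

Hypothesis dZ_cojac : cojacobi dZ.
Hypothesis D_bracket : forall a b : 'I_m, (a < b)%N -> forall x,
  Dapp D a (Dapp D b x) - Dapp D b (Dapp D a x)
  = \sum_(i < m) strc dZ i a b *: Dapp D i x.
Hypothesis phi_cocycle : forall v i j k,
  \sum_(l < m) wedge21 (phi (Dapp D l v)) (ev l) i j k
  + \sum_(a < m) \sum_(b < m | (a < b)%N)
      phi v a b * (wedge21 (dZ (ev a)) (ev b) i j k
                   - wedge12 (ev a) (dZ (ev b)) i j k) = 0.

(* Condition (b) is imposed for [a < b] only; antisymmetry of [dZ] extends it. *)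
Lemma D_commutator a b (v : 'rV[F]_p) :
  v *m D b *m D a - v *m D a *m D b = \sum_(i < m) dZ (ev i) a b *: (v *m D i).
Proof.
case: (ltngtP a b) => [ab|ba|/val_inj ->].
- exact: D_bracket.
- rewrite -opprB (D_bracket ba) -sumrN; apply: eq_bigr => i _.
  by have [-> _] := dZ_L2 (ev i); rewrite scaleNr.
- rewrite subrr big1 // => i _.
  by have [_ ->] := dZ_L2 (ev i); rewrite scale0r.
Qed.

Local Notation cojacN x := (cojac_expr dN (dN x)).

Lemma cojacNE x i j k : cojacN x i j k =
  dN (col k (dN x))^T i j + dN (col i (dN x))^T j k + dN (col j (dN x))^T k i.
Proof. exact: cojac_exprE deltaN_linear (deltaN_L2 x). Qed.

Lemma cojacN_WWW x s t u : cojacN x (W s) (W t) (W u) = 0.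
Proof. by rewrite cojacNE !deltaN_WW !addr0. Qed.

Lemma cojacN_WWZ x s t c : cojacN x (W s) (W t) (Z c) = 0.
Proof.
by rewrite cojacNE deltaN_WW deltaN_WZ deltaN_ZW !lsub_col_W !mul0mx !mxE oppr0 !addr0.
Qed.

Lemma cojacN_WZZ x s a b : cojacN x (W s) (Z a) (Z b) = 0.
Proof.
rewrite cojacNE deltaN_WZ deltaN_ZZ deltaN_ZW !lsub_col_Z rsub_col_W lsub_col_W.
rewrite (is_linear0 phi_lin) (is_linear_sum_ev dZ_lin) summxE [X in _ + (_ + X)]mxE addr0.
move: (congr1 (fun u : 'rV[F]_p => u 0 s) (D_commutator a b (lsubmx x))) => /=.
rewrite mxE [X in _ + X = _]mxE summxE => comm.
rewrite addrAC comm -big_split big1 //= => i _.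
by rewrite mxE [X in _ + X]mxE; ring.
Qed.

Lemma cojacN_ZZZ x a b c : cojacN x (Z a) (Z b) (Z c) = 0.
Proof.
rewrite cojacNE !deltaN_ZZ !rsub_col_Z !lsub_col_Z !(is_linearD dZ_lin) !addmxE.
have dZ_part := dZ_cojac (rsubmx x) a b c.
rewrite cojac_exprE // in dZ_part.
have phi_part := phi_cocycle (lsubmx x) a b c.
rewrite sum_wedge21_ev -/(cojac_expr dZ (phi (lsubmx x)) a b c) cojac_exprE // in phi_part.
rewrite /Dapp in phi_part.
by move: (congr2 +%R dZ_part phi_part); rewrite addr0 => <-; ring.
Qed.

Lemma deltaN_cojacobi : cojacobi dN.
Proof.
have rot x i j k : cojacN x i j k = cojacN x j k i.
  exact: cojac_expr_rot deltaN_linear (deltaN_L2 x).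
move=> x i j k.
case: (split_ordP i) => s ->; case: (split_ordP j) => t ->;
  case: (split_ordP k) => u ->.
- exact: cojacN_WWW.
- exact: cojacN_WWZ.
- by rewrite rot rot cojacN_WWZ.
- exact: cojacN_WZZ.
- by rewrite rot cojacN_WWZ.
- by rewrite rot cojacN_WZZ.
- by rewrite rot rot cojacN_WZZ.
- exact: cojacN_ZZZ.
Qed.

End TwoStepNilpotent.

Unset Implicit Arguments.

Theorem mainTheorem6 (F : fieldType) (p m : nat) (T : 'I_m -> 'M[F]_p)
    (dZ : 'rV[F]_m -> 'M[F]_m) (D : 'I_m -> 'M[F]_p)
    (phi : 'rV[F]_p -> 'M[F]_m) :
  [pchar F] =i pred0 ->
  (forall i v, Tform (T i) v v = 0) ->
  (forall v, (forall w i, Tform (T i) v w = 0) -> v = 0) ->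
  (exists i, T i != 0) ->
  is_linear dZ -> (forall z, in_L2 (dZ z)) -> cojacobi dZ ->
  (forall a b : 'I_m, (a < b)%N -> forall x,
     Dapp D a (Dapp D b x) - Dapp D b (Dapp D a x)
     = \sum_(i < m) strc dZ i a b *: Dapp D i x) ->
  (forall x y,
     \sum_(i < m) Tform (T i) x y *: dZ (ev i)
     = \sum_(i < m) \sum_(j < m)
         (Tform (T i) (Dapp D j x) y + Tform (T i) x (Dapp D j y))
           *: wedge2 (ev i) (ev j)) ->
  is_linear phi -> (forall v, in_L2 (phi v)) ->
  (forall v i j k,
     \sum_(l < m) wedge21 (phi (Dapp D l v)) (ev l) i j k
     + \sum_(a < m) \sum_(b < m | (a < b)%N)
         phi v a b * (wedge21 (dZ (ev a)) (ev b) i j k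
                      - wedge12 (ev a) (dZ (ev b)) i j k) = 0) ->
  lie_bialgebra (brN T) (deltaN dZ D phi).
Proof.
move=> _ T_alt _ _ dZ_lin dZ_L2 dZ_cojac D_bracket dZ_T_D phi_lin phi_L2 phi_cocycle.
split.
- exact: deltaN_linear.
- exact: deltaN_L2.
- exact: deltaN_cojacobi.
- exact: deltaN_cocycle.
Qed.
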